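(* Let $k\geq 0$ and $\mathcal{P}\subseteq\mathbb{Z}_{\geq0}$, working with formal power series over a commutative ring $R\supseteq\mathbb{Q}$. Then $$P^{k,\mathcal{P}}(u,z)=F^{k,\mathcal{P}}(u,z)\,e^{T^{k,\mathcal{P}}(u,z)}.$$
   Context: $[n]=\{1,\dots,n\}$. Labeled rooted tree: tree on vertex set $[m]$ with a distinguished root; children of $v$ are its neighbours farther from the root; the height of a vertex $v$ is the maximal distance from $v$ down to a leaf of its subtree; a tree satisfies $\mathcal{P}$ if each vertex has a number of children in $\mathcal{P}$. $T^{k,\mathcal{P}}(u,z)=\sum_t u^{\chi_k(t)}z^{|t|}/|t|!$ over all labeled rooted trees satisfying $\mathcal{P}$, $\chi_k(t)$ = number of vertices of height $<k$. $F^{k,\mathcal{P}}(u,z)=\sum_{n\ge0}\frac{z^n}{n!}\sum_f u^{\,n-|f^k([n])|}$ over functions $f:[n]\to[n]$ with $|f^{-1}(x)|\in\mathcal{P}$ for all $x$. $P^{k,\mathcal{P}}(u,z)$ is defined by the same formula but summing over partial functions $f$ on $[n]$ (maps from some subset $S\subseteq[n]$ into $[n]$) with $|f^{-1}(x)|\in\mathcal{P}$ for every $x\in[n]$; here $f^k([n])$ is the set of values $f^k(x)$ over $x$ at which $f^k$ is defined. $e^w=\sum w^n/n!$. *)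

From mathcomp Require Import all_boot all_order all_algebra.
Set Implicit Arguments. Unset Strict Implicit. Unset Printing Implicit Defensive.
Import GRing.Theory.
Local Open Scope ring_scope.

(* ---------- Labeled rooted trees on [m] = 'I_m, encoded by parent maps ----------
   A rooted tree on 'I_m is encoded by its parent map par : 'I_m -> 'I_m,
   where par r = r for the root r and par x is the neighbour of x closer
   to the root otherwise.  Such maps are exactly those with a unique point r
   to which every vertex is sent by iterating par (m iterations suffice). *)

Definition rtree (m : nat) (par : {ffun 'I_m -> 'I_m}) : bool :=
  [exists r : 'I_m, (par r == r) && [forall x : 'I_m, iter m par x == r]].

Definition child (m : nat) (par : {ffun 'I_m -> 'I_m}) (x v : 'I_m) : bool :=
  (par x == v) && (x != v).

Definition nchildren (m : nat) (par : {ffun 'I_m -> 'I_m}) (v : 'I_m) : nat :=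
  #|[set x | child par x v]|.

Definition is_leaf (m : nat) (par : {ffun 'I_m -> 'I_m}) (w : 'I_m) : bool :=
  nchildren par w == 0%N.

Definition down_dist (m : nat) (par : {ffun 'I_m -> 'I_m}) (w v : 'I_m) (j : nat)
  : bool :=
  (iter j par w == v) && [forall i : 'I_j, iter i par w != v].

Definition height (m : nat) (par : {ffun 'I_m -> 'I_m}) (v : 'I_m) : nat :=
  \max_(w | is_leaf par w) \max_(j < m | down_dist par w v j) j.

Definition chi (k m : nat) (par : {ffun 'I_m -> 'I_m}) : nat :=
  #|[set v | (height par v < k)%N]|.

Definition treeP (P : pred nat) (m : nat) (par : {ffun 'I_m -> 'I_m}) : bool :=
  [forall v, nchildren par v \in P].

(* ---------- bivariate series: z-coefficients are polynomials in u ----------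
   A series  sum_n a_n(u) z^n  is represented by n |-> a_n(u) : {poly R}. *)

Definition series (R : comUnitRingType) := nat -> {poly R}.

Definition sermul (R : comUnitRingType) (a b : series R) : series R :=
  fun n => \sum_(i < n.+1) a i * b (n - i)%N.

Definition serpow (R : comUnitRingType) (a : series R) (j : nat) : series R :=
  iter j (sermul a) (fun n => if n is 0%N then 1 else 0).

(* exponential of a series with zero constant term (only terms j <= n
   contribute to the coefficient of z^n) *)
Definition serexp (R : comUnitRingType) (a : series R) : series R :=
  fun n => \sum_(j < n.+1) ((j`!)%:R : R)^-1 *: serpow a j n.

Definition egf (R : comUnitRingType) (c : nat -> {poly R}) : series R :=
  fun n => ((n`!)%:R : R)^-1 *: c n.

Definition Tser (R : comUnitRingType) (k : nat) (P : pred nat) : series R :=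
  egf (fun m => \sum_(par : {ffun 'I_m -> 'I_m} | rtree par && treeP P par)
                   'X^(chi k par)).

Definition Fser (R : comUnitRingType) (k : nat) (P : pred nat) : series R :=
  egf (fun n => \sum_(f : {ffun 'I_n -> 'I_n} |
                        [forall x : 'I_n, #|[set y | f y == x]| \in P])
                  'X^(n - #|[set iter k f x | x : 'I_n]|)).

Definition piter (n k : nat) (f : {ffun 'I_n -> option 'I_n}) (x : 'I_n)
  : option 'I_n :=
  iter k (fun o => obind f o) (Some x).

Definition Pser (R : comUnitRingType) (k : nat) (P : pred nat) : series R :=
  egf (fun n => \sum_(f : {ffun 'I_n -> option 'I_n} |
                        [forall x : 'I_n, #|[set y | f y == Some x]| \in P])
                  'X^(n - #|[set z : 'I_n | [exists x, piter k f x == Some z]]|)).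

From mathcomp Require Import all_boot all_algebra zify.
Set Implicit Arguments. Unset Strict Implicit. Unset Printing Implicit Defensive.
Import GRing.Theory.

(* The partial functions on a finite set [S] split along the set [C] of points
   whose orbit never becomes undefined: no arrow enters or leaves [C], [f] is
   total on [C] and acyclic on [S :\: C].  Fibre sizes and the weight
   [#|S| - #|f^k(S)|] are additive along this splitting, so summing over [C]
   gives [P = F * Forest] as exponential generating functions.  An acyclic
   partial function is a rooted forest: [f] maps a vertex to its parent, the
   roots are the points where [f] is undefined, and [f^k(S)] is the set of
   vertices of height at least [k].  Splitting off the tree containing a fixed
   point shows that [Forest' = T' Forest] coefficientwise, and [Forest(0) = 1],
   hence [Forest = exp T]. *)

Local Notation pfun N := {ffun 'I_N -> option 'I_N}.

Section PartialIteration.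
Variable N : nat.
Implicit Types f : pfun N.

Lemma iter_obind_None j f : iter j (fun o => obind f o) None = None.
Proof. by elim: j => //= j ->. Qed.

Lemma piterSr j f x : piter j.+1 f x = obind (piter j f) (f x).
Proof. by rewrite /piter iterSr /=; case: (f x) => //=; apply: iter_obind_None. Qed.

Lemma piterD i j f x : piter (i + j) f x = obind (piter i f) (piter j f x).
Proof. by rewrite /piter iterD; case: (iter j _ _) => //=; apply: iter_obind_None. Qed.

Lemma piter_None_pos j f x : 0 < j -> f x = None -> piter j f x = None.
Proof. by case: j => // j _ fx; rewrite piterSr fx. Qed.

Lemma piter_None_leq i j f x : i <= j -> piter i f x = None -> piter j f x = None.
Proof. by move=> /subnK <- fx_undef; rewrite piterD fx_undef. Qed.

Lemma piter_split i j f x y : i <= j -> piter j f x = Some y ->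
  exists2 z, piter (j - i) f x = Some z & piter i f z = Some y.
Proof.
move=> le_ij; rewrite -{1}(subnKC le_ij) piterD.
by case: (piter (j - i) f x) => //= z; exists z.
Qed.

(* Pigeonhole on the orbit of [Some x] under [obind f], a total map on the
   [N.+1]-element type [option 'I_N] fixing [None]. *)
Lemma piterN_None j f x : piter j f x = None -> piter N f x = None.
Proof.
move=> undef_j; pose F := fun o => obind f o.
have reach : fconnect F (Some x) None by rewrite -undef_j; apply: fconnect_iter.
apply: (piter_None_leq (i := findex F (Some x) None)); last exact: iter_findex.
have card_opt : #|{: option 'I_N}| = N.+1 by rewrite card_option card_ord.
by rewrite -ltnS -card_opt; apply: leq_trans (findex_max reach) (max_card _).
Qed.

Lemma piter_not_periodic j f x :
  piter N f x = None -> 0 < j -> piter j f x != Some x.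
Proof.
move=> fNx j_gt0; apply/eqP => fjx.
have periodic s : piter (s * j) f x = Some x.
  by elim: s => // s IHs; rewrite mulSn piterD IHs /= fjx.
by move: (piter_None_leq (leq_pmulr N j_gt0) fNx); rewrite periodic.
Qed.

Lemma piterN_None_step f x y :
  f x = Some y -> (piter N f y == None) = (piter N f x == None).
Proof.
move=> fx; have fNx : piter N.+1 f x = piter N f y by rewrite piterSr fx.
apply/eqP/eqP => [fNy | /(piter_None_leq (leqnSn N))]; last by rewrite fNx.
by apply: (piterN_None (j := N.+1)); rewrite fNx.
Qed.

Definition pfill f (y : 'I_N) : 'I_N := odflt y (f y).

Definition proot f x := iter N (pfill f) x.

Lemma piter_pfill f j x y : piter j f x = Some y -> iter j (pfill f) x = y.
Proof.
elim: j y => [|j IHj] y; first by case.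
rewrite /= -/(piter j f x); case fjx: (piter j f x) => [z|] //= fz.
by rewrite (IHj z fjx) /pfill fz.
Qed.

Lemma piter_last_defined f x : piter N f x = None ->
  exists2 j, j < N & exists2 r, piter j f x = Some r & f r = None.
Proof.
move=> fNx; have ex_undef : exists j, piter j f x == None by exists N; apply/eqP.
case: (ex_minnP ex_undef) => -[|j] /eqP fj1x min_j //; exists j.
  by apply: min_j; rewrite fNx.
case fjx: (piter j f x) => [r|]; last by have := min_j j (introT eqP fjx); rewrite ltnn.
by exists r; rewrite // -fj1x /= -/(piter j f x) fjx.
Qed.

Lemma proot_undef f x : piter N f x = None -> f (proot f x) = None.
Proof.
move=> /piter_last_defined [j /ltnW le_jN [r fjx fr]].
have fill_r : pfill f r = r by rewrite /pfill fr.
have -> : proot f x = iter (N - j) (pfill f) (iter j (pfill f) x).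
  by rewrite -iterD subnK.
by rewrite (piter_pfill fjx) iter_fix.
Qed.

Lemma proot_id f r : f r = None -> proot f r = r.
Proof. by move=> fr; rewrite /proot iter_fix // /pfill fr. Qed.

Lemma proot_step f x y :
  piter N f x = None -> f x = Some y -> proot f y = proot f x.
Proof.
move=> fNx fx; have : iter N.+1 (pfill f) x = proot f y by rewrite iterSr /pfill fx.
by rewrite iterS -/(proot f x) {1}/pfill proot_undef.
Qed.

End PartialIteration.

Lemma forall_in_split (T : finType) (S A : {set T}) (p q r : pred T) :
  A \subset S -> {in A, p =1 q} -> {in S :\: A, p =1 r} ->
  [forall x in S, p x] = [forall x in A, q x] && [forall x in S :\: A, r x].
Proof.
move=> sAS pq pr; apply/forall_inP/andP => [pS | [/forall_inP qA /forall_inP rB] x xS].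
  split; apply/forall_inP => x xX; first by rewrite -pq ?pS ?(subsetP sAS).
  by move: xX (xX) => /setDP [xS _] xB; rewrite -pr ?pS.
have [xA|xA] := boolP (x \in A); first by rewrite pq ?qA.
have xB : x \in S :\: A by rewrite inE xA.
by rewrite pr ?rB.
Qed.

Section PartialFunctions.
Variable N : nat.
Implicit Types (f g h : pfun N) (S A B : {set 'I_N}).

Definition pclosed A f : bool :=
  [forall x in A, if f x is Some y then y \in A else true].

Definition pfun_on S f : bool :=
  [forall x, if f x is Some y then (x \in S) && (y \in S) else true].

Definition fibres_in (P : pred nat) S f : bool :=
  [forall x in S, #|[set y | f y == Some x]| \in P].

Definition pimage k S f := [set z | [exists x in S, piter k f x == Some z]].

(* By [piterN_None], [piter N f x == None] iff the orbit of [x] eventually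
   becomes undefined. *)
Definition acyclic_on S f : bool := [forall x in S, piter N f x == None].

Definition total_on S f : bool := [forall x in S, f x != None].

Definition prestrict A f : pfun N := [ffun x => if x \in A then f x else None].

Definition pglue A g h : pfun N := [ffun x => if x \in A then g x else h x].

Lemma pclosed_Some A f x y : pclosed A f -> x \in A -> f x = Some y -> y \in A.
Proof. by move=> /forall_inP/(_ x) + xA fx => /(_ xA); rewrite fx. Qed.

Lemma pfun_on_Some S f x y : pfun_on S f -> f x = Some y -> x \in S /\ y \in S.
Proof. by move=> /forallP/(_ x) + fx; rewrite fx => /andP. Qed.

Lemma pfun_on_out S f x : pfun_on S f -> x \notin S -> f x = None.
Proof.
move=> f_on; apply: contraNeq; case fx: (f x) => [y|] // _.
by have [] := pfun_on_Some f_on fx.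
Qed.

Lemma pfun_on_closed S f : pfun_on S f -> pclosed S f.
Proof.
move=> f_on; apply/forall_inP => x _; case fx: (f x) => [y|] //.
by have [] := pfun_on_Some f_on fx.
Qed.

Lemma pfun_on_setT f : pfun_on setT f.
Proof. by apply/forallP => x; case: (f x) => //= y; rewrite !in_setT. Qed.

Lemma piter_closed A f j x y :
  pclosed A f -> x \in A -> piter j f x = Some y -> y \in A.
Proof.
move=> f_cl; elim: j y => [|j IHj] y xA; first by case=> <-.
rewrite /= -/(piter j f x); case fjx: (piter j f x) => [z|] //= fz.
exact: pclosed_Some f_cl (IHj z xA fjx) fz.
Qed.

Lemma eq_piter_on B f g : {in B, f =1 g} -> pclosed B g ->
  forall j, {in B, piter j f =1 piter j g}.
Proof.
move=> fg g_cl; elim=> [|j IHj] x xB //.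
rewrite !piterSr fg //; case gx: (g x) => [y|] //=.
exact: IHj (pclosed_Some g_cl xB gx).
Qed.

Lemma pimage_sub k S f : pclosed S f -> pimage k S f \subset S.
Proof.
move=> f_cl; apply/subsetP => z; rewrite inE => /exists_inP [x xS /eqP fkx].
exact: piter_closed f_cl xS fkx.
Qed.

Lemma prestrict_on A f : pclosed A f -> pfun_on A (prestrict A f).
Proof.
move=> f_cl; apply/forallP => x; rewrite ffunE.
case: ifP => // xA; case fx: (f x) => [y|] //.
by rewrite (pclosed_Some f_cl xA fx).
Qed.

Lemma pglue_prestrict S A f :
  pfun_on S f -> pglue A (prestrict A f) (prestrict (S :\: A) f) = f.
Proof.
move=> f_on; apply/ffunP => x; rewrite !ffunE inE.
case: ifP => xA; rewrite ?ffunE ?xA //=.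
by case: ifP => // xS; rewrite (pfun_on_out f_on) ?xS.
Qed.

Definition proots S f := [set y in S | f y == None].

Lemma piter_total A g j x :
  pclosed A g -> total_on A g -> x \in A -> piter j g x != None.
Proof.
move=> g_cl /forall_inP g_tot; elim: j x => [|j IHj] x xA //.
rewrite piterSr; move: (g_tot x xA); case gx: (g x) => [y|] //= _.
exact: IHj (pclosed_Some g_cl xA gx).
Qed.

Lemma pclosed_invariant S f (phi : pred 'I_N) :
  pfun_on S f -> (forall x y, x \in S -> f x = Some y -> phi y = phi x) ->
  pclosed [set x in S | phi x] f /\ pclosed (S :\: [set x in S | phi x]) f.
Proof.
move=> f_on phi_inv; split; apply/forall_inP => x xX.
  case fx: (f x) => [y|] //; have [xS yS] := pfun_on_Some f_on fx.
  by move: xX; rewrite !inE yS (phi_inv x y) // => /andP [].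
case fx: (f x) => [y|] //; have [xS yS] := pfun_on_Some f_on fx.
by move: xX; rewrite !inE yS xS (phi_inv x y).
Qed.

Lemma proot_closed A f x : pclosed A f -> x \in A -> proot f x \in A.
Proof.
move=> f_cl xA; suff iter_in j : iter j (pfill f) x \in A by apply: iter_in.
elim: j => //= j IHj; rewrite /pfill; case fx: (f _) => [y|] //.
exact: pclosed_Some f_cl IHj fx.
Qed.

Definition recurrent S f := [set x in S | piter N f x != None].

Definition component S f x0 := [set y in S | proot f y == proot f x0].

Section Glue.
Variables (S A : {set 'I_N}) (g h : pfun N).
Hypotheses (sAS : A \subset S) (g_on : pfun_on A g) (h_on : pfun_on (S :\: A) h).
Let f := pglue A g h.

Lemma pglue_in x : x \in A -> f x = g x.
Proof. by move=> xA; rewrite ffunE xA. Qed.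

Lemma pglue_out x : x \notin A -> f x = h x.
Proof. by move=> xA; rewrite ffunE (negbTE xA). Qed.

Lemma pglue_closed_in : pclosed A f.
Proof.
apply/forall_inP => x xA; rewrite pglue_in //.
by case gx: (g x) => [y|] //; have [] := pfun_on_Some g_on gx.
Qed.

Lemma pglue_closed_out : pclosed (S :\: A) f.
Proof.
apply/forall_inP => x /setDP [_ xA]; rewrite pglue_out //.
by case hx: (h x) => [y|] //; have [] := pfun_on_Some h_on hx.
Qed.

Lemma pglue_on : pfun_on S f.
Proof.
apply/forallP => x; rewrite /f ffunE; case: ifP => _.
  case gx: (g x) => [y|] //; have [xA yA] := pfun_on_Some g_on gx.
  by rewrite !(subsetP sAS).
case hx: (h x) => [y|] //; have [] := pfun_on_Some h_on hx.
by move=> /setDP [-> _] /setDP [-> _].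
Qed.

Lemma piter_pglue_in j : {in A, piter j f =1 piter j g}.
Proof. by apply: eq_piter_on; [apply: pglue_in | apply: pfun_on_closed]. Qed.

Lemma piter_pglue_out j : {in S :\: A, piter j f =1 piter j h}.
Proof.
apply: eq_piter_on; last exact: pfun_on_closed.
by move=> x /setDP [_ xA]; apply: pglue_out.
Qed.

Lemma fibre_pglue_in x :
  x \in A -> [set y | f y == Some x] = [set y | g y == Some x].
Proof.
move=> xA; apply/setP => y; rewrite !inE.
have [yA|yA] := boolP (y \in A); first by rewrite pglue_in.
rewrite pglue_out // (pfun_on_out g_on yA); case hy: (h y) => [z|] //.
have [_ /setDP [_ zA]] := pfun_on_Some h_on hy.
by apply: contraNF zA => /eqP [->].
Qed.

Lemma fibre_pglue_out x :
  x \in S :\: A -> [set y | f y == Some x] = [set y | h y == Some x].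
Proof.
move=> /setDP [_ xA]; apply/setP => y; rewrite !inE.
have [yA|yA] := boolP (y \in A); last by rewrite pglue_out.
rewrite pglue_in // (pfun_on_out h_on) ?inE ?yA //.
case gy: (g y) => [z|] //; have [_ zA] := pfun_on_Some g_on gy.
by apply: contraNF xA => /eqP [<-].
Qed.

Lemma fibres_in_pglue P :
  fibres_in P S f = fibres_in P A g && fibres_in P (S :\: A) h.
Proof.
apply: forall_in_split => // x xX.
  by rewrite fibre_pglue_in.
by rewrite fibre_pglue_out.
Qed.

Lemma acyclic_on_pglue :
  acyclic_on S f = acyclic_on A g && acyclic_on (S :\: A) h.
Proof.
apply: forall_in_split => // x xX.
  by rewrite piter_pglue_in.
by rewrite piter_pglue_out.
Qed.

Lemma pimage_pglue k : pimage k S f = pimage k A g :|: pimage k (S :\: A) h.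
Proof.
apply/setP => z; rewrite !inE; apply/exists_inP/orP.
  move=> [x xS fkx]; have [xA|xA] := boolP (x \in A).
    by left; apply/exists_inP; exists x; rewrite -?piter_pglue_in.
  have xB : x \in S :\: A by rewrite inE xA.
  by right; apply/exists_inP; exists x; rewrite -?piter_pglue_out.
case=> /exists_inP [x xX fkx].
  by exists x; rewrite ?piter_pglue_in ?(subsetP sAS).
by move: xX (xX) => /setDP [xS _] xB; exists x; rewrite ?piter_pglue_out.
Qed.

Lemma pimage_deficit_pglue k :
  #|S| - #|pimage k S f|
  = (#|A| - #|pimage k A g|) + (#|S :\: A| - #|pimage k (S :\: A) h|).
Proof.
have subA := pimage_sub k (pfun_on_closed g_on).
have subB := pimage_sub k (pfun_on_closed h_on).
have disj : [disjoint pimage k A g & pimage k (S :\: A) h].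
  by apply: disjointW subA subB _; rewrite disjoints_subset setCD subsetUr.
rewrite pimage_pglue cardsU (disjoint_setI0 disj) cards0 subn0.
rewrite -(cardsID A S) (setIidPr sAS).
by rewrite subnDA -addnBAC ?addnBA ?subset_leq_card.
Qed.

Lemma prestrict_pglue_in : prestrict A f = g.
Proof.
apply/ffunP => x; rewrite ffunE; case: ifP => xA; first by rewrite pglue_in.
by rewrite (pfun_on_out g_on) ?xA.
Qed.

Lemma prestrict_pglue_out : prestrict (S :\: A) f = h.
Proof.
apply/ffunP => x; rewrite ffunE; case: ifP => [/setDP [_ xA]|xB].
  by rewrite pglue_out.
by rewrite (pfun_on_out h_on) ?xB.
Qed.

Lemma recurrent_pglue :
  (recurrent S f == A) = total_on A g && acyclic_on (S :\: A) h.
Proof.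
apply/eqP/andP => [recA | [g_tot h_acyc]].
  split; apply/forall_inP => x.
    move=> xA; move: (xA); rewrite -{1}recA inE => /andP [_].
    rewrite piter_pglue_in //; apply: contra => /eqP gx; apply/eqP.
    by apply: piter_None_pos gx; apply: leq_ltn_trans (ltn_ord x).
  move=> xB; move: (xB) => /setDP [xS xA]; rewrite -piter_pglue_out //.
  by move: xA; rewrite -recA inE xS negbK.
apply/setP => x; rewrite inE; have [xA|xA] := boolP (x \in A).
  rewrite (subsetP sAS) // piter_pglue_in //.
  by apply: piter_total g_tot xA; apply: pfun_on_closed.
case: (boolP (x \in S)) => //= xS; have xB : x \in S :\: A by rewrite inE xA.
by rewrite piter_pglue_out // (forall_inP h_acyc x xB).
Qed.

Hypotheses (g_acyc : acyclic_on A g) (h_acyc : acyclic_on (S :\: A) h).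

Lemma component_pglue x0 : x0 \in A -> (component S f x0 == A) = (#|proots A g| == 1).
Proof.
have f_acyc : acyclic_on S f by rewrite acyclic_on_pglue // g_acyc h_acyc.
have rootA y : y \in A -> proot f y \in A /\ g (proot f y) = None.
  move=> yA; have rA := proot_closed pglue_closed_in yA; split => //.
  rewrite -(pglue_in rA); apply: proot_undef.
  by apply/eqP; apply: (forall_inP f_acyc); apply: (subsetP sAS).
move=> x0A; apply/eqP/cards1P => [compA | [r rootsA]].
  exists (proot f x0); apply/setP => r; rewrite !inE.
  apply/andP/eqP => [[rA /eqP gr] | ->]; last by have [-> /eqP] := rootA x0 x0A.
  have : r \in component S f x0 by rewrite compA.
  by rewrite inE => /andP [_ /eqP <-]; rewrite proot_id // pglue_in.
have rootA_r y : y \in A -> proot f y = r.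
  by move=> yA; have [rA gr] := rootA y yA; apply/set1P; rewrite -rootsA inE rA gr.
apply/setP => y; rewrite inE; have [yA|yA] := boolP (y \in A).
  by rewrite (subsetP sAS) //= (rootA_r y yA) (rootA_r x0 x0A) eqxx.
case: (boolP (y \in S)) => //= yS; apply/negbTE.
have yB : y \in S :\: A by rewrite inE yA.
have := proot_closed pglue_closed_out yB; apply: contraL => /eqP ->.
by have [rA _] := rootA x0 x0A; rewrite inE rA.
Qed.

End Glue.

Lemma big_pglue (R : pzSemiRingType) S A (Q Q1 Q2 : pred (pfun N))
    (F F1 F2 : pfun N -> R) :
  A \subset S ->
  (forall f, Q f -> [/\ pfun_on S f, pclosed A f & pclosed (S :\: A) f]) ->
  (forall g, Q1 g -> pfun_on A g) -> (forall h, Q2 h -> pfun_on (S :\: A) h) ->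
  (forall g h, pfun_on A g -> pfun_on (S :\: A) h ->
     Q (pglue A g h) = Q1 g && Q2 h) ->
  (forall g h, Q1 g -> Q2 h -> F (pglue A g h) = (F1 g * F2 h)%R) ->
  (\sum_(f | Q f) F f = (\sum_(g | Q1 g) F1 g) * \sum_(h | Q2 h) F2 h)%R.
Proof.
move=> sAS Q_split Q1_on Q2_on Q_glue F_glue.
rewrite big_distrl /= (eq_bigr _ (fun g _ => big_distrr _ _ _)) pair_big /=.
rewrite (reindex_onto (fun p : pfun N * pfun N => pglue A p.1 p.2)
                      (fun f => (prestrict A f, prestrict (S :\: A) f))) /=;
  last by move=> f /Q_split [f_on _ _]; rewrite pglue_prestrict.
have Q_pair (p : pfun N * pfun N) : Q (pglue A p.1 p.2) &&
    ((prestrict A (pglue A p.1 p.2), prestrict (S :\: A) (pglue A p.1 p.2)) == p)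
  = Q1 p.1 && Q2 p.2.
  case: p => g h /=; apply/idP/idP => [/andP [Qf /eqP [gE hE]] | /andP [Qg Qh]].
    have [_ fA fB] := Q_split _ Qf.
    have g_on : pfun_on A g by rewrite -gE; apply: prestrict_on fA.
    have h_on : pfun_on (S :\: A) h by rewrite -hE; apply: prestrict_on fB.
    by rewrite -Q_glue.
  have [g_on h_on] := (Q1_on _ Qg, Q2_on _ Qh).
  by rewrite Q_glue ?Qg ?Qh //= prestrict_pglue_in // prestrict_pglue_out.
by apply: eq_big => [p|p]; rewrite Q_pair // => /andP [Qg Qh]; apply: F_glue.
Qed.

End PartialFunctions.

Section WeightedSums.
Variables (R : nzRingType) (k : nat) (P : pred nat) (N : nat).
Implicit Types (f g h : pfun N) (S A : {set 'I_N}).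
Local Open Scope ring_scope.

Definition pweight S f : {poly R} := 'X^(#|S| - #|pimage k S f|).

Definition pfun_sum S :=
  \sum_(f | pfun_on S f && fibres_in P S f) pweight S f.

Definition total_sum S :=
  \sum_(f | [&& pfun_on S f, total_on S f & fibres_in P S f]) pweight S f.

Definition forest_sum S :=
  \sum_(f | [&& pfun_on S f, acyclic_on S f & fibres_in P S f]) pweight S f.

Definition tree_sum S :=
  \sum_(f | [&& pfun_on S f, acyclic_on S f, #|proots S f| == 1%N
              & fibres_in P S f]) pweight S f.

Lemma pweight_pglue S A g h : A \subset S -> pfun_on A g -> pfun_on (S :\: A) h ->
  pweight S (pglue A g h) = pweight A g * pweight (S :\: A) h.
Proof. by move=> sAS g_on h_on; rewrite /pweight pimage_deficit_pglue // exprD. Qed.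

Lemma pfun_sum_recurrent S :
  pfun_sum S = \sum_(A : {set 'I_N} | A \subset S) total_sum A * forest_sum (S :\: A).
Proof.
rewrite /pfun_sum (partition_big (recurrent S) (fun A => A \subset S)) /=;
  last by move=> f _; apply/subsetP => x /setIdP [].
apply: eq_bigr => A sAS; apply: (big_pglue (S := S) (A := A)) => //.
- move=> f /andP [/andP [f_on _] /eqP <-].
  have [] // := pclosed_invariant (phi := fun x => piter N f x != None) f_on.
  by move=> x y _ fx; rewrite (piterN_None_step fx).
- by move=> g /and3P [].
- by move=> h /and3P [].
- move=> g h g_on h_on.
  rewrite pglue_on // fibres_in_pglue // recurrent_pglue // g_on h_on /=.
  by rewrite -!andbA; do !bool_congr.
- by move=> g h /and3P [g_on _ _] /and3P [h_on _ _]; rewrite pweight_pglue.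
Qed.

Lemma forest_sum_component S x0 : x0 \in S ->
  forest_sum S =
  \sum_(A : {set 'I_N} | (A \subset S) && (x0 \in A)) tree_sum A * forest_sum (S :\: A).
Proof.
move=> x0S; rewrite /forest_sum (partition_big (fun f => component S f x0)
  (fun A => (A \subset S) && (x0 \in A))) /=; last first.
  move=> f _; apply/andP; split; last by rewrite inE x0S eqxx.
  by apply/subsetP => x /setIdP [].
apply: eq_bigr => A /andP [sAS x0A]; apply: (big_pglue (S := S) (A := A)) => //.
- move=> f /andP [/and3P [f_on f_acyc _] /eqP <-].
  have [] // := pclosed_invariant (phi := fun y => proot f y == proot f x0) f_on.
  by move=> x y xS fx; rewrite (proot_step _ fx) //; apply/eqP/(forall_inP f_acyc).
- by move=> g /and4P [].
- by move=> h /and3P [].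
- move=> g h g_on h_on.
  rewrite pglue_on // fibres_in_pglue // acyclic_on_pglue // g_on h_on /=.
  case g_acyc: (acyclic_on A g); case h_acyc: (acyclic_on (S :\: A) h);
    rewrite /= ?andbF //.
  by rewrite component_pglue // -!andbA; do !bool_congr.
- by move=> g h /and4P [g_on _ _ _] /and3P [h_on _ _]; rewrite pweight_pglue.
Qed.

End WeightedSums.

Section Relabel.
Variables (N m : nat) (emb : 'I_m -> 'I_N) (A : {set 'I_N}).
Hypotheses (emb_inj : injective emb) (A_emb : A =i codom emb).
Implicit Types (f : pfun N) (g : pfun m).

Definition emb_inv (x : 'I_N) : option 'I_m := [pick i | emb i == x].

Definition plift g : pfun N :=
  [ffun x => obind (fun i => omap emb (g i)) (emb_inv x)].

Definition punlift f : pfun m :=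
  [ffun i => obind emb_inv (f (emb i))].

Lemma emb_invK i : emb_inv (emb i) = Some i.
Proof.
rewrite /emb_inv; case: pickP => [j /eqP/emb_inj -> // | /(_ i)].
by rewrite eqxx.
Qed.

Lemma mem_emb i : emb i \in A.
Proof. by rewrite A_emb codom_f. Qed.

Lemma mem_embP x : reflect (exists i, x = emb i) (x \in A).
Proof. by rewrite A_emb; apply: codomP. Qed.

Lemma card_emb : #|A| = m.
Proof. by rewrite (eq_card A_emb) card_codom // card_ord. Qed.

Lemma plift_emb g i : plift g (emb i) = omap emb (g i).
Proof. by rewrite ffunE emb_invK. Qed.

Lemma plift_out g x : x \notin A -> plift g x = None.
Proof.
move=> xA; rewrite ffunE /emb_inv; case: pickP => [i /eqP emb_i | //].
by rewrite -emb_i mem_emb in xA.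
Qed.

Lemma plift_on g : pfun_on A (plift g).
Proof.
apply/forallP => x; have [/mem_embP [i ->]|xA] := boolP (x \in A).
  by rewrite plift_emb; case: (g i) => //= j; rewrite !mem_emb.
by rewrite plift_out.
Qed.

Lemma plift_inj : injective plift.
Proof.
move=> g1 g2 eq_g; apply/ffunP => i; move/ffunP/(_ (emb i)): eq_g.
by rewrite !plift_emb => /(inj_omap emb_inj).
Qed.

Lemma plift_onto f : pfun_on A f -> plift (punlift f) = f.
Proof.
move=> f_on; apply/ffunP => x; have [/mem_embP [i ->]|xA] := boolP (x \in A).
  rewrite plift_emb ffunE; case fx: (f (emb i)) => [y|] //=.
  by have [_ /mem_embP [j ->]] := pfun_on_Some f_on fx; rewrite emb_invK.
by rewrite plift_out // (pfun_on_out f_on).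
Qed.

Lemma piter_plift g j i : piter j (plift g) (emb i) = omap emb (piter j g i).
Proof. by elim: j i => // j IHj i; rewrite !piterSr plift_emb; case: (g i). Qed.

Lemma fibre_plift g i :
  [set y | plift g y == Some (emb i)] = emb @: [set y | g y == Some i].
Proof.
apply/setP => x; have [/mem_embP [j ->]|xA] := boolP (x \in A).
  rewrite inE plift_emb (mem_imset _ _ emb_inj) inE.
  by case: (g j) => //= l; apply/eqP/eqP => [[/emb_inj ->] | [->]].
rewrite inE plift_out //; apply/esym/negbTE/imsetP => -[y _ xE].
by rewrite xE mem_emb in xA.
Qed.

Lemma fibres_in_plift P g : fibres_in P A (plift g) = fibres_in P setT g.
Proof.
apply/forall_inP/forall_inP => [fib i _ | fib x /mem_embP [i ->]].
  by rewrite -(card_imset _ emb_inj) -fibre_plift fib ?mem_emb.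
by rewrite fibre_plift card_imset ?fib ?in_setT.
Qed.

Lemma pimage_plift k g : pimage k A (plift g) = emb @: pimage k setT g.
Proof.
apply/setP => z; rewrite inE; apply/exists_inP/imsetP.
  case=> _ /mem_embP [i ->]; rewrite piter_plift.
  case gki: (piter k g i) => [y|] //= /eqP [<-]; exists y => //.
  by rewrite inE; apply/exists_inP; exists i; rewrite ?gki.
case=> y; rewrite inE => /exists_inP [i _ /eqP gki] ->.
by exists (emb i); rewrite ?mem_emb // piter_plift gki.
Qed.

Lemma pweight_plift (R : nzRingType) k g :
  pweight R k A (plift g) = pweight R k setT g.
Proof. by rewrite /pweight pimage_plift card_imset // card_emb cardsT card_ord. Qed.

Lemma total_on_plift g : total_on A (plift g) = total_on setT g.
Proof.
apply/forall_inP/forall_inP => [tot i _ | tot x /mem_embP [i ->]].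
  by move: (tot _ (mem_emb i)); rewrite plift_emb; case: (g i).
by rewrite plift_emb; move: (tot i (in_setT i)); case: (g i).
Qed.

Lemma acyclic_on_plift g : acyclic_on A (plift g) = acyclic_on setT g.
Proof.
have le_mN : m <= N by rewrite -card_emb -[X in _ <= X]card_ord max_card.
apply/forall_inP/forall_inP => [acyc i _ | acyc x /mem_embP [i ->]].
  move: (acyc _ (mem_emb i)); rewrite piter_plift.
  by case gNi: (piter N g i) => //= _; rewrite (piterN_None gNi).
by rewrite piter_plift (piter_None_leq le_mN) ?(eqP (acyc i _)) ?in_setT.
Qed.

Lemma proots_plift g : #|proots A (plift g)| = #|proots setT g|.
Proof.
rewrite -(card_imset _ emb_inj); apply: eq_card => x.
have [/mem_embP [i ->]|xA] := boolP (x \in A).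
  by rewrite (mem_imset _ _ emb_inj) !inE mem_emb plift_emb; case: (g i).
rewrite !inE (negbTE xA); apply/esym/negbTE/imsetP => -[y _ xE].
by rewrite xE mem_emb in xA.
Qed.

Lemma big_plift (V : nmodType) (Q : pred (pfun N))
    (Q' : pred (pfun m)) (F : _ -> V) F' :
  (forall g, Q (plift g) = Q' g) -> (forall g, Q' g -> F (plift g) = F' g) ->
  (\sum_(f | pfun_on A f && Q f) F f = \sum_(g | pfun_on setT g && Q' g) F' g)%R.
Proof.
move=> QE FE; rewrite (reindex_onto plift punlift); last first.
  by move=> f /andP [f_on _]; rewrite plift_onto.
have unliftK g : punlift (plift g) = g.
  by apply: plift_inj; apply: plift_onto (plift_on g).
apply: eq_big => g; rewrite plift_on QE unliftK eqxx ?(pfun_on_setT g) andbT //.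
exact: FE.
Qed.

End Relabel.

Lemma mem_codom_enum_val (T : finType) (A : {set T}) : A =i codom (@enum_val _ (mem A)).
Proof.
move=> x; apply/idP/codomP => [xA | [i ->]]; last exact: enum_valP.
by exists (enum_rank_in xA x); rewrite enum_rankK_in.
Qed.

Section Standardize.
Variables (R : nzRingType) (k : nat) (P : pred nat) (N : nat).

Lemma total_sum_ord (A : {set 'I_N}) :
  total_sum R k P A = total_sum R k P [set: 'I_#|A|].
Proof.
have [emb_inj A_emb] := (@enum_val_inj _ (mem A), mem_codom_enum_val A).
rewrite /total_sum; apply: (big_plift emb_inj A_emb) => g.
  by rewrite total_on_plift // fibres_in_plift.
by rewrite pweight_plift.
Qed.

Lemma tree_sum_ord (A : {set 'I_N}) :
  tree_sum R k P A = tree_sum R k P [set: 'I_#|A|].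
Proof.
have [emb_inj A_emb] := (@enum_val_inj _ (mem A), mem_codom_enum_val A).
rewrite /tree_sum; apply: (big_plift emb_inj A_emb) => g.
  by rewrite acyclic_on_plift // proots_plift // fibres_in_plift.
by rewrite pweight_plift.
Qed.

End Standardize.

Section RootedTrees.
Variables (M : nat) (par : {ffun 'I_M -> 'I_M}).

Definition parent_pfun : pfun M :=
  [ffun x => if par x == x then None else Some (par x)].

Lemma parent_pfun_None x : (parent_pfun x == None) = (par x == x).
Proof. by rewrite ffunE; case: (par x == x). Qed.

Lemma piter_parent j x y : piter j parent_pfun x = Some y -> iter j par x = y.
Proof.
move=> /piter_pfill <-; apply: eq_iter => z.
by rewrite /pfill ffunE; case: eqP.
Qed.

Lemma piter_parent_fixfree j x :
  (forall i, i < j -> par (iter i par x) != iter i par x) ->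
  piter j parent_pfun x = Some (iter j par x).
Proof.
elim: j => // j IHj no_fix; rewrite /= -/(piter j parent_pfun x) IHj /=; last first.
  by move=> i lt_ij; apply: no_fix; apply: ltnW.
by rewrite ffunE (negbTE (no_fix j (ltnSn j))).
Qed.

Lemma child_parent x v : child par x v = (parent_pfun x == Some v).
Proof.
rewrite /child ffunE; case: (eqVneq (par x) x) => [-> | px_x]; first by rewrite andbN.
by rewrite (inj_eq (@Some_inj _)); case: eqP => // <-; rewrite eq_sym.
Qed.

Lemma fibres_in_parent P : fibres_in P setT parent_pfun = treeP P par.
Proof.
have fibE v : [set y | parent_pfun y == Some v] = [set x | child par x v].
  by apply/setP => x; rewrite !inE child_parent.
apply/forall_inP/forallP => [fib v | fib v _]; last by rewrite fibE; apply: fib.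
by rewrite /nchildren -fibE fib ?in_setT.
Qed.

Lemma rtree_parent :
  rtree par = acyclic_on setT parent_pfun && (#|proots setT parent_pfun| == 1%N).
Proof.
apply/existsP/andP => [[r /andP [/eqP par_r /forallP to_r]] | [acyc]].
  have rootsE : proots setT parent_pfun = [set r].
    apply/setP => y; rewrite !inE parent_pfun_None.
    apply/eqP/eqP => [par_y | ->] //; apply/eqP; move: (to_r y).
    by rewrite iter_fix.
  split; last by rewrite rootsE cards1.
  apply/forall_inP => x _; apply/eqP/(piterN_None (j := M.+1)).
  rewrite /= -/(piter M parent_pfun x); case hMx: (piter M parent_pfun x) => [y|] //=.
  by rewrite -(piter_parent hMx) (eqP (to_r x)) ffunE par_r eqxx.
move=> /cards1P [r rootsE]; have : r \in proots setT parent_pfun by rewrite rootsE set11.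
rewrite !inE parent_pfun_None => /eqP par_r; exists r; rewrite par_r eqxx /=.
apply/forallP => x; have /eqP hMx := forall_inP acyc x (in_setT x).
have [j lt_jM [r' hjx hr']] := piter_last_defined hMx.
have r'_r : r' = r by apply/set1P; rewrite -rootsE !inE hr'.
have -> : iter M par x = iter (M - j) par (iter j par x) by rewrite -iterD subnK // ltnW.
by rewrite (piter_parent hjx) r'_r iter_fix.
Qed.

Section Heights.
Hypothesis par_tree : rtree par.

Lemma acyclic_parent : acyclic_on setT parent_pfun.
Proof. by move: par_tree; rewrite rtree_parent => /andP []. Qed.

Lemma piterM_parent x : piter M parent_pfun x = None.
Proof. exact/eqP/(forall_inP acyclic_parent x (in_setT x)). Qed.

Lemma depth_lt j w v : piter j parent_pfun w = Some v -> j < M.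
Proof.
rewrite ltnNge; apply: contraPN => le_Mj.
by rewrite (piter_None_leq le_Mj (piterM_parent w)).
Qed.

Lemma down_dist_parent w v j : down_dist par w v j = (piter j parent_pfun w == Some v).
Proof.
apply/andP/eqP => [[/eqP jw_v /forallP not_v] | hjw].
  rewrite -jw_v; apply: piter_parent_fixfree => i lt_ij; apply/eqP => fix_i.
  move: (not_v (Ordinal lt_ij)); rewrite /= -jw_v.
  by rewrite -(subnK (ltnW lt_ij)) iterD (iter_fix _ fix_i) eqxx.
split; first by rewrite (piter_parent hjw).
apply/forallP => -[i lt_ij] /=; apply/eqP => iw_v.
have [y hiw hy] := piter_split (leq_subr i j) hjw.
rewrite (subKn (ltnW lt_ij)) in hiw.
have y_v : y = v by rewrite -(piter_parent hiw).
have ji_gt0 : 0 < j - i by rewrite subn_gt0.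
by move: (piter_not_periodic (piterM_parent v) ji_gt0); rewrite -{1}y_v hy eqxx.
Qed.

Lemma is_leaf_parent w : is_leaf par w = [forall y, parent_pfun y != Some w].
Proof.
rewrite /is_leaf /nchildren cards_eq0; apply/eqP/forallP => [noch y | noch].
  by move: (in_set0 y); rewrite -noch inE child_parent => ->.
by apply/setP => y; rewrite !inE child_parent (negbTE (noch y)).
Qed.

Lemma leaf_below j x v : piter j parent_pfun x = Some v ->
  exists2 w, is_leaf par w & exists2 j', j <= j' & piter j' parent_pfun w = Some v.
Proof.
move=> hjx; have [d lt_d] := ubnP (M - j).
elim: d j x hjx lt_d => // d IHd j x hjx lt_d.
have [leaf_x | ] := boolP (is_leaf par x); first by exists x => //; exists j.
rewrite is_leaf_parent negb_forall => /existsP [c /negPn /eqP hc].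
have hjc : piter j.+1 parent_pfun c = Some v by rewrite piterSr hc.
have lt_jM := depth_lt hjc.
have [|w leaf_w [j' lt_jj' hj'w]] := IHd j.+1 c hjc; first by lia.
by exists w => //; exists j'; first exact: ltnW.
Qed.

Lemma height_parent k v :
  (k <= height par v) = [exists x, piter k parent_pfun x == Some v].
Proof.
apply/idP/existsP => [le_kh | [x /eqP hkx]].
  case: k le_kh => [|k] le_kh; first by exists v.
  apply/existsP; apply: contraLR le_kh; rewrite negb_exists -ltnNge ltnS.
  move=> /forallP no_x; apply/bigmax_leqP => w _; apply/bigmax_leqP => j.
  rewrite down_dist_parent leqNgt => /eqP hjw; apply/negP => lt_kj.
  have [y _ hky] := piter_split lt_kj hjw.
  by move: (no_x y); rewrite hky eqxx.
have [w leaf_w [j le_kj hjw]] := leaf_below hkx.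
apply: leq_trans le_kj (leq_trans _ (leq_bigmax_cond w leaf_w)).
by apply: (leq_bigmax_cond (Ordinal (depth_lt hjw))); rewrite down_dist_parent hjw.
Qed.

Lemma chi_parent k : chi k par = M - #|pimage k setT parent_pfun|.
Proof.
have imE : pimage k setT parent_pfun = ~: [set v | height par v < k].
  apply/setP => v; rewrite !inE -leqNgt height_parent.
  by apply/exists_inP/existsP => [[x _ hx] | [x hx]]; exists x.
by rewrite imE /chi [LHS]cardsCs card_ord.
Qed.

End Heights.

Lemma pfill_parent : [ffun x => pfill parent_pfun x] = par.
Proof. by apply/ffunP => x; rewrite !ffunE /pfill ffunE; case: eqP. Qed.

End RootedTrees.

Section Bridges.
Variables (R : nzRingType) (k : nat) (P : pred nat).
Local Open Scope ring_scope.

Lemma tree_sum_rtree M : tree_sum R k P [set: 'I_M] =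
  \sum_(par : {ffun 'I_M -> 'I_M} | rtree par && treeP P par) 'X^(chi k par).
Proof.
rewrite /tree_sum (reindex_onto (@parent_pfun M) (fun g => [ffun x => pfill g x])) /=.
  apply: eq_big => par.
    by rewrite pfill_parent eqxx pfun_on_setT andbT rtree_parent fibres_in_parent -!andbA.
  move=> /andP [/and4P [_ acyc roots _] _].
  by rewrite /pweight cardsT card_ord -chi_parent // rtree_parent acyc.
move=> g /and4P [_ /forall_inP acyc _ _]; apply/ffunP => x; rewrite !ffunE /pfill.
have gx_x : g x != Some x := piter_not_periodic (eqP (acyc x (in_setT x))) (ltn0Sn 0).
case: (g x) gx_x => [y|] /=; last by rewrite eqxx.
by rewrite (inj_eq (@Some_inj _)) => /negbTE ->.
Qed.

Definition pfun_of M (f : {ffun 'I_M -> 'I_M}) : pfun M :=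
  [ffun x => Some (f x)].

Lemma piter_pfun_of M (f : {ffun 'I_M -> 'I_M}) j x :
  piter j (pfun_of f) x = Some (iter j f x).
Proof. by elim: j => // j IHj; rewrite /= -/(piter j _ x) IHj /= ffunE. Qed.

Lemma pfill_pfun_of M (f : {ffun 'I_M -> 'I_M}) : [ffun x => pfill (pfun_of f) x] = f.
Proof. by apply/ffunP => x; rewrite !ffunE /pfill ffunE. Qed.

Lemma fibres_in_pfun_of M (f : {ffun 'I_M -> 'I_M}) :
  fibres_in P setT (pfun_of f) = [forall x, #|[set y | f y == x]| \in P].
Proof.
have fibE x : [set y | pfun_of f y == Some x] = [set y | f y == x].
  by apply/setP => y; rewrite !inE ffunE (inj_eq (@Some_inj _)).
apply/forall_inP/forallP => [fib x | fib x _]; first by rewrite -fibE fib ?in_setT.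
by rewrite fibE fib.
Qed.

Lemma pimage_pfun_of M (f : {ffun 'I_M -> 'I_M}) :
  pimage k setT (pfun_of f) = [set iter k f x | x : 'I_M].
Proof.
apply/setP => z; rewrite inE; apply/exists_inP/imsetP => [[x _] | [x _ ->]].
  by rewrite piter_pfun_of => /eqP [<-]; exists x.
by exists x; rewrite ?in_setT // piter_pfun_of.
Qed.

Lemma total_sum_ffun M : total_sum R k P [set: 'I_M] =
  \sum_(f : {ffun 'I_M -> 'I_M} | [forall x, #|[set y | f y == x]| \in P])
     'X^(M - #|[set iter k f x | x : 'I_M]|).
Proof.
rewrite /total_sum (reindex_onto (@pfun_of M) (fun g => [ffun x => pfill g x])) /=.
  apply: eq_big => f; last by rewrite /pweight cardsT card_ord pimage_pfun_of.
  have -> : total_on setT (pfun_of f) by apply/forall_inP => x _; rewrite ffunE.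
  by rewrite pfun_on_setT fibres_in_pfun_of pfill_pfun_of eqxx andbT.
move=> g /and3P [_ /forall_inP tot _]; apply/ffunP => x; rewrite !ffunE /pfill.
by move: (tot x (in_setT x)); case: (g x).
Qed.

Lemma pfun_sum_setT n : pfun_sum R k P [set: 'I_n] =
  \sum_(f : pfun n |
          [forall x : 'I_n, #|[set y | f y == Some x]| \in P])
     'X^(n - #|[set z : 'I_n | [exists x, piter k f x == Some z]]|).
Proof.
rewrite /pfun_sum; apply: eq_big => f.
  rewrite pfun_on_setT; apply/forall_inP/forallP => [fib x | fib x _]; last exact: fib.
  exact: fib (in_setT x).
move=> _; rewrite /pweight cardsT card_ord; congr ('X^(_ - _)); apply: eq_card => z.
by rewrite !inE; apply/exists_inP/existsP => [[x _ hx] | [x hx]]; exists x.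
Qed.

End Bridges.

Section ExponentialSeries.
Variable R : comUnitRingType.
Local Open Scope ring_scope.
Hypothesis natS_unit : forall n : nat, (n.+1)%:R \is a @GRing.unit R.
Implicit Type a : series R.

Lemma fact_unit n : (n`!)%:R \is a @GRing.unit R.
Proof. by have := fact_gt0 n; case: (n`!) => // m _; apply: natS_unit. Qed.

Lemma invr_factS n : ((n.+1)`!%:R)^-1 * (n.+1)%:R = ((n`!)%:R)^-1 :> R.
Proof. by rewrite factS natrM invrM ?fact_unit // -mulrA mulVr ?mulr1. Qed.

Lemma serpow_lt a j m : a 0%N = 0 -> (m < j)%N -> serpow a j m = 0.
Proof.
move=> a0; elim: j m => // j IHj m lt_mj; rewrite /= /sermul big1 // => i _.
have [-> | i_gt0] := posnP i; first by rewrite a0 mul0r.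
by rewrite -/(serpow a j) IHj ?mulr0 //; have := ltn_ord i; lia.
Qed.

Lemma serpowE a L j n : (n < L)%N -> serpow a j n = ((\poly_(i < L) a i) ^+ j)`_n.
Proof.
elim: j n => [|j IHj] n lt_nL; first by rewrite expr0 coef1; case: n {lt_nL}.
rewrite exprS coefM /= /sermul; apply: eq_bigr => i _.
have lt_iL : (i < L)%N by apply: leq_ltn_trans lt_nL; rewrite -ltnS.
by rewrite coef_poly lt_iL -/(serpow a j) IHj // (leq_ltn_trans (leq_subr _ _)).
Qed.

Lemma serpow_deriv a j n :
  (n.+1)%:R *: serpow a j.+1 n.+1 =
  (j.+1)%:R *: \sum_(i < n.+1) ((i.+1)%:R *: a i.+1) * serpow a j (n - i)%N.
Proof.
pose A := \poly_(i < n.+2) a i.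
rewrite (serpowE a (L := n.+2)) // !scaler_nat.
have := coef_deriv (A ^+ j.+1) n; rewrite deriv_exp /= coefMn coefM => <-.
congr (_ *+ _); apply: eq_bigr => i _.
have lt_iL : (i.+1 < n.+2)%N by rewrite !ltnS -ltnS.
rewrite coef_deriv coef_poly lt_iL scaler_nat (serpowE a (L := n.+2)) //.
by rewrite ltnS (leq_trans (leq_subr _ _)).
Qed.

(* The coefficientwise form of [(exp a)' = a' exp a]. *)
Lemma serexp_deriv a s : a 0%N = 0 ->
  (s.+1)%:R *: serexp a s.+1 =
  \sum_(i < s.+1) ((i.+1)%:R *: a i.+1) * serexp a (s - i)%N.
Proof.
move=> a0; rewrite /serexp big_ord_recl /= scaler0 add0r scaler_sumr.
transitivity (\sum_(j < s.+1) \sum_(i < s.+1)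
   ((i.+1)%:R *: a i.+1) * (((j`!)%:R)^-1 *: serpow a j (s - i)%N)).
  apply: eq_bigr => j _; rewrite scalerA mulrC -scalerA serpow_deriv.
  rewrite scalerA invr_factS scaler_sumr.
  by apply: eq_bigr => i _; rewrite scalerAr.
rewrite exchange_big /=; apply: eq_bigr => i _; rewrite mulr_sumr.
rewrite (big_ord_widen (n1 := (s - i).+1) s.+1 (fun j => ((i.+1)%:R *: a i.+1) *
   (((j`!)%:R)^-1 *: serpow a j (s - i)%N))) ?ltnS ?leq_subr //.
rewrite [RHS]big_mkcond /=; apply: eq_bigr => j _; case: ifP => // /negbT.
by rewrite -leqNgt => lt_sij; rewrite serpow_lt ?scaler0 ?mulr0.
Qed.

End ExponentialSeries.

Lemma sum_subsets_card (T : finType) (V : nmodType) (S : {set T}) (H : nat -> V) :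
  (\sum_(B : {set T} | B \subset S) H #|B| =
   \sum_(i < #|S|.+1) H i *+ 'C(#|S|, i))%R.
Proof.
rewrite (partition_big (fun B : {set T} => inord #|B| : 'I_#|S|.+1) xpredT) //=.
apply: eq_bigr => i _; rewrite -cards_draws -sumr_const.
apply: eq_big => B; last first.
  by move=> /andP [sBS /eqP <-]; rewrite inordK // ltnS subset_leq_card.
rewrite inE; case sBS: (B \subset S) => //=.
by rewrite -(inj_eq val_inj) /= inordK // ltnS subset_leq_card.
Qed.

Lemma sum_subsets_card_mem (T : finType) (V : nmodType) (S : {set T}) x0
    (G : nat -> V) : x0 \in S ->
  (\sum_(A : {set T} | (A \subset S) && (x0 \in A)) G #|A| =
   \sum_(i < #|S|.-1.+1) G i.+1 *+ 'C(#|S|.-1, i))%R.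
Proof.
move=> x0S; have cardS : #|S :\ x0| = #|S|.-1 by rewrite (cardsD1 x0 S) x0S.
rewrite -cardS -(sum_subsets_card (S :\ x0) (fun i => G i.+1)).
rewrite (reindex_onto (fun B => x0 |: B) (fun A => A :\ x0)) /=; last first.
  by move=> A /andP [_ x0A]; rewrite setD1K.
apply: eq_big => B.
  rewrite setU11 andbT subUset sub1set x0S subsetD1 /=.
  have [x0B|x0B] := boolP (x0 \in B); last by rewrite setU1K // eqxx.
  rewrite andbF; apply/negbTE; apply: contraTN x0B => /andP [_ /eqP <-].
  by rewrite setD11.
move=> /andP [_ /eqP B_E]; have x0B : x0 \notin B by rewrite -B_E setD11.
by rewrite cardsU1 x0B.
Qed.

Section Enumeration.
Variable R : comUnitRingType.
Local Open Scope ring_scope.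
Hypothesis natS_unit : forall n : nat, (n.+1)%:R \is a @GRing.unit R.
Variables (k : nat) (P : pred nat).
Local Notation tau := (Tser R k P).

Lemma forest_sum_set0 N : forest_sum R k P (set0 : {set 'I_N}) = 1.
Proof.
rewrite /forest_sum (big_pred1 [ffun => None]) => [|f].
  by rewrite /pweight cards0 sub0n expr0.
have -> : acyclic_on set0 f by apply/forall_inP => x; rewrite inE.
have -> : fibres_in P set0 f by apply/forall_inP => x; rewrite inE.
rewrite !andbT /=; apply/idP/eqP => [f_on | ->].
  by apply/ffunP => x; rewrite ffunE (pfun_on_out f_on) ?inE.
by apply/forallP => x; rewrite ffunE.
Qed.

Lemma Tser_tree_sum m : tau m = ((m`!)%:R)^-1 *: tree_sum R k P [set: 'I_m].
Proof. by rewrite /Tser /egf tree_sum_rtree. Qed.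

Lemma Tser0 : tau 0%N = 0.
Proof.
rewrite Tser_tree_sum /tree_sum big_pred0 ?scaler0 // => g.
have -> : proots setT g = set0 by apply/setP => -[].
by rewrite cards0 /= !andbF.
Qed.

Lemma natr_bin_fact n i : (i <= n)%N ->
  ('C(n, i) * (n - i)`!)%:R = (n`!)%:R * ((i`!)%:R)^-1 :> R.
Proof.
move=> le_in; apply: (canRL (mulrK (fact_unit natS_unit i))).
by rewrite -natrM -mulnA [((n - i)`! * _)%N]mulnC bin_fact.
Qed.

Lemma egf_binomial_term (x y : {poly R}) n i : (i <= n)%N ->
  ((n`!)%:R)^-1 *: ((x * (((n - i)`!)%:R *: y)) *+ 'C(n, i))
  = (((i`!)%:R)^-1 *: x) * y.
Proof.
move=> le_in; rewrite -scaler_nat -scalerAr !scalerA -mulrA -natrM natr_bin_fact //.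
by rewrite mulrA mulVr ?fact_unit // mul1r scalerAl.
Qed.

Lemma serexpS_Tser s :
  ((s.+1)`!)%:R *: serexp tau s.+1 =
  \sum_(i < s.+1) (tree_sum R k P [set: 'I_i.+1] *
                   (((s - i)`!)%:R *: serexp tau (s - i)%N)) *+ 'C(s, i).
Proof.
rewrite factS natrM mulrC -scalerA (serexp_deriv natS_unit _ Tser0) scaler_sumr.
apply: eq_bigr => i _; apply/esym; rewrite -scaler_nat -scalerAr scalerA -natrM.
rewrite (@natr_bin_fact s i (ltn_ord i)) Tser_tree_sum scalerA -scalerAl scalerA.
by rewrite [_.+1%:R * _]mulrC invr_factS.
Qed.

Lemma forest_sum_serexp N (S : {set 'I_N}) :
  forest_sum R k P S = (#|S|`!)%:R *: serexp tau #|S|.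
Proof.
have [s] := ubnP #|S|; elim: s S => // s IHs S lt_Ss.
have [-> | /set0Pn [x0 x0S]] := eqVneq S set0.
  rewrite forest_sum_set0 cards0 /serexp big_ord1 /= scalerA.
  by rewrite mulrV ?fact_unit // scale1r.
have S_gt0 : (0 < #|S|)%N by apply/card_gt0P; exists x0.
rewrite (forest_sum_component _ _ _ x0S) (eq_bigr (fun A : {set 'I_N} =>
  tree_sum R k P [set: 'I_#|A|] *
  (((#|S| - #|A|)`!)%:R *: serexp tau (#|S| - #|A|)%N))); last first.
  move=> A /andP [sAS x0A]; have A_gt0 : (0 < #|A|)%N by apply/card_gt0P; exists x0.
  have cardD : #|S :\: A| = (#|S| - #|A|)%N by rewrite cardsD (setIidPr sAS).
  by rewrite tree_sum_ord IHs cardD //; lia.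
rewrite (sum_subsets_card_mem (fun a => tree_sum R k P [set: 'I_a] *
  (((#|S| - a)`!)%:R *: serexp tau (#|S| - a)%N)) x0S).
by move: S_gt0; case: #|S| => // s' _; rewrite serexpS_Tser.
Qed.

End Enumeration.

Local Open Scope ring_scope.

Theorem theorem5p11 (R : comUnitRingType)
  (HQ : forall n : nat, (n.+1)%:R \is a @GRing.unit R)
  (k : nat) (P : pred nat) :
  forall n : nat,
    Pser R k P n = sermul (Fser R k P) (serexp (Tser R k P)) n.
Proof.
move=> n; rewrite /Pser /egf -pfun_sum_setT pfun_sum_recurrent.
rewrite (eq_bigr (fun A : {set 'I_n} => total_sum R k P [set: 'I_#|A|] *
   (((n - #|A|)`!)%:R *: serexp (Tser R k P) (n - #|A|)%N))); last first.
  move=> A _; rewrite total_sum_ord (forest_sum_serexp HQ) setTD (cardsCs (~: A)).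
  by rewrite setCK card_ord.
rewrite (sum_subsets_card _ (fun a => total_sum R k P [set: 'I_a] *
  (((n - a)`!)%:R *: serexp (Tser R k P) (n - a)%N))).
rewrite cardsT card_ord /sermul scaler_sumr; apply: eq_bigr => i _.
rewrite (egf_binomial_term HQ); last by rewrite -ltnS.
by rewrite /Fser /egf total_sum_ffun.
Qed.
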